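(* Let $d\geq 3$ and $n\geq d+1$ be integers. Then $\mathcal{F}(C_d(n))$ is $2$-colorable. Moreover, $\tau(\mathcal{F}(C_d(n)))=\left\lceil\frac{n-d}{2}\right\rceil+1$ if $d$ is even, and $\tau(\mathcal{F}(C_d(n)))=2$ if $d$ is odd.
   Context: $C_d(n)$ is the cyclic $d$-polytope on $n$ vertices, the convex hull of $n$ distinct points on the moment curve $t\mapsto(t,t^2,\dots,t^d)$ in $\mathbb{R}^d$, with vertices labelled $1,\dots,n$ in increasing order of parameter. It is simplicial, and its facet hypergraph $\mathcal{F}(C_d(n))$ consists exactly of the $d$-subsets $f\subseteq[n]$ such that for all $i<j$ with $i,j\notin f$, the set $\{k\in f: i<k<j\}$ has even size (Gale's evenness criterion). $2$-colorable means the vertices can be $2$-colored with no monochromatic hyperedge; $\tau$ is the minimum size of a vertex set meeting every hyperedge. *)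

From mathcomp Require Import all_boot.
Set Implicit Arguments. Unset Strict Implicit. Unset Printing Implicit Defensive.

(* Vertices of C_d(n) are labelled by 'I_n (i.e. 0..n-1, in increasing order
   of the moment-curve parameter; the paper's labels 1..n shifted by one). *)

Definition gale_even (n : nat) (f : {set 'I_n}) : bool :=
  [forall i : 'I_n, forall j : 'I_n,
     ((i < j)%N && (i \notin f) && (j \notin f)) ==>
       ~~ odd #|[set k in f | (i < k < j)%N]| ].

Definition cyclic_facets (d n : nat) : {set {set 'I_n}} :=
  [set f : {set 'I_n} | (#|f| == d) && gale_even f].

Definition two_colorable (T : finType) (H : {set {set T}}) : Prop :=
  exists c : T -> bool, forall e, e \in H ->
    exists x, exists y, [/\ x \in e, y \in e & c x != c y].

Definition transversal (T : finType) (H : {set {set T}}) (S : {set T}) : bool :=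
  [forall e in H, ~~ [disjoint S & e]].

Definition is_tau (T : finType) (H : {set {set T}}) (t : nat) : Prop :=
  (exists S : {set T}, transversal H S /\ #|S| = t) /\
  (forall S : {set T}, transversal H S -> (t <= #|S|)%N).

From Pilot Require Import Defs.
From mathcomp Require Import all_boot zify.
Set Implicit Arguments. Unset Strict Implicit. Unset Printing Implicit Defensive.

(* By Gale's criterion a vertex of a facet other than the first and the last
   one is never isolated, so it has a neighbour in the facet of the opposite
   parity: colouring by parity is proper.  For odd d, a facet avoiding the
   first and the last vertex would put its d vertices between two non-vertices,
   so these two vertices form a transversal; for even d, a facet avoiding all
   even vertices below 2s has no vertex below 2s - 1 (an odd one would be
   isolated), hence at most n + 1 - 2s vertices.  Conversely a facet avoiding S
   is assembled from an initial segment, a final segment and disjoint pairs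
   {i, i+1} placed greedily in the gaps of S; it has d vertices when |S| <= 1,
   or when d is even and d + 2|S| <= n + 1. *)

Definition count_below (p : nat -> bool) (z : nat) : nat := \sum_(0 <= i < z) p i.

Lemma count_below0 p : count_below p 0 = 0.
Proof. by rewrite /count_below big_geq. Qed.

Lemma count_belowS p z : count_below p z.+1 = count_below p z + p z.
Proof. by rewrite /count_below big_nat_recr. Qed.

Lemma count_below_mono p : {homo count_below p : m n / m <= n}.
Proof. by move=> m n mn; rewrite /count_below (big_cat_nat (leq0n m) mn) leq_addr. Qed.

Lemma count_below_bounded (p : nat -> bool) e z :
  (forall i, p i -> i < e) -> e <= z -> count_below p z = count_below p e.
Proof.
move=> pe; elim: z => [|z IH]; first by rewrite leqn0 => /eqP->.
rewrite leq_eqVlt => /orP [/eqP<- // | ez]; rewrite count_belowS IH //.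
by case: (boolP (p z)) => [/pe|_]; lia.
Qed.

Lemma count_below_predU (p q : nat -> bool) z : (forall i, p i -> ~~ q i) ->
  count_below (fun i => p i || q i) z = count_below p z + count_below q z.
Proof.
move=> pq; elim: z => [|z IH]; rewrite ?count_below0 // !count_belowS IH.
by case: (boolP (p z)) => [/pq/negbTE -> | _] /=; lia.
Qed.

Lemma count_below_lt x z : count_below (fun i => i < x) z = minn x z.
Proof. by elim: z => [|z IH]; rewrite ?count_below0 ?count_belowS ?IH /=; lia. Qed.

Lemma count_below_ge y z : count_below (fun i => y <= i) z = z - y.
Proof. by elim: z => [|z IH]; rewrite ?count_below0 ?count_belowS ?IH /=; lia. Qed.

Lemma count_below_itv a b z : count_below (fun i => a <= i < b) z = minn b z - a.
Proof. by elim: z => [|z IH]; rewrite ?count_below0 ?count_belowS ?IH /=; lia. Qed.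

Lemma count_below_window (p : nat -> bool) a b z :
  count_below (fun i => p i && (a <= i < b)) z =
  count_below p (minn b z) - count_below p a.
Proof.
elim: z => [|z IH]; first by rewrite minn0 !count_below0.
rewrite count_belowS IH; case: (ltnP z b) => zb /=.
  rewrite (minn_idPr zb) count_belowS andbT.
  by case: (leqP a z) => az /=; have := count_below_mono p az;
     rewrite ?count_belowS; lia.
by rewrite (minn_idPl (leqW zb)) !andbF addn0.
Qed.

Lemma count_below_even m : count_below (fun i => ~~ odd i) (2 * m) = m.
Proof.
elim: m => [|m IH]; rewrite ?muln0 ?count_below0 //.
by rewrite mulnS !addSn add0n !count_belowS IH /=; lia.
Qed.

(* [p] is a disjoint union of blocks {i, i+1}. *)
Definition paired (p : nat -> bool) : Prop :=
  forall z, ~~ p z -> ~~ odd (count_below p z).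

Definition pairs_in (s : nat -> bool) (lo e k : nat) (p : nat -> bool) : Prop :=
  [/\ paired p, forall i, p i -> lo <= i < e, forall i, p i -> ~~ s i
    & count_below p e = 2 * k].

Section Pairs.
Variable s : nat -> bool.

Lemma pairs_in0 lo e : pairs_in s lo e 0 (fun _ => false).
Proof. by split=> // [z _|]; rewrite /count_below big1. Qed.

Lemma pairs_in_widen lo e e' k p :
  e <= e' -> pairs_in s lo e k p -> pairs_in s lo e' k p.
Proof.
move=> ee' [pp pin ps pc]; split=> //; first by move=> i /pin; lia.
by rewrite (count_below_bounded (e := e)) // => i /pin /andP[].
Qed.

Lemma pairs_in_snoc lo e k p : lo <= e -> ~~ s e -> ~~ s e.+1 ->
  pairs_in s lo e k p -> pairs_in s lo e.+2 k.+1 (fun i => p i || (e <= i < e.+2)).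
Proof.
move=> le se se1 [pp pin ps pc].
have disj i : p i -> ~~ (e <= i < e.+2) by move/pin; lia.
have cnt z : count_below (fun i => p i || (e <= i < e.+2)) z
             = count_below p z + (minn e.+2 z - e).
  by rewrite count_below_predU // count_below_itv.
split.
- move=> z; rewrite negb_or cnt => /andP[/pp]; lia.
- by move=> i /orP [/pin|]; lia.
- move=> i /orP [/ps // | /andP[ei ie]].
  by have [->|->] : i = e \/ i = e.+1 by lia.
- rewrite cnt (count_below_bounded (e := e)) ?pc; try lia.
  by move=> i /pin /andP[].
Qed.

Lemma exists_pairs_in lo e k :
  2 * k + 2 * (count_below s e - count_below s lo) <= e - lo ->
  exists p, pairs_in s lo e k p.
Proof.
elim/ltn_ind: e k => e IH [|k] hb; first by exists (fun _ => false); apply: pairs_in0.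
case: e IH hb => [|[|e]] IH hb; try lia.
have le : lo <= e by lia.
have := count_below_mono s le; rewrite !count_belowS in hb => mono.
have [s1|ns1] := boolP (s e.+1).
  have [|p pk] := IH e.+1 (ltnSn _) k.+1; first by rewrite count_belowS; lia.
  by exists p; apply: pairs_in_widen pk.
have [s0|ns0] := boolP (s e).
  have [|p pk] := IH e (leqnSn _) k.+1; first lia.
  by exists p; apply: pairs_in_widen pk; lia.
have [|p pk] := IH e (leqnSn _) k; first lia.
by exists (fun i => p i || (e <= i < e.+2)); apply: pairs_in_snoc.
Qed.
End Pairs.

Definition gale_parity (n : nat) (q : nat -> bool) : Prop :=
  exists c, forall z, z < n -> ~~ q z -> odd (count_below q z) = c.

Lemma card_set_count n (q : nat -> bool) : #|[set x : 'I_n | q x]| = count_below q n.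
Proof.
rewrite -sum1_card big_mkcond /= /count_below big_mkord.
by apply: eq_bigr => i _; rewrite inE; case: (q i).
Qed.

Lemma gale_even_of_parity n q : gale_parity n q -> gale_even [set x : 'I_n | q x].
Proof.
case=> c qc; apply/forallP => i; apply/forallP => j; apply/implyP.
rewrite !inE => /andP[/andP[ij qi] qj].
have -> : #|[set k in [set x : 'I_n | q x] | i < k < j]|
          = count_below (fun k => q k && (i.+1 <= k < j)) n.
  by rewrite -card_set_count; apply: eq_card => k; rewrite !inE.
rewrite count_below_window (minn_idPl (ltnW (ltn_ord j))) count_belowS (negbTE qi).
have := count_below_mono q (ltnW ij).
have := qc i (ltn_ord i) qi; have := qc j (ltn_ord j) qj; lia.
Qed.

Lemma count_below_blocks x y (p : nat -> bool) z :
  x <= y -> (forall i, p i -> x <= i < y) ->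
  count_below (fun i => (i < x) || p i || (y <= i)) z
  = minn x z + count_below p z + (z - y).
Proof.
move=> xy pin.
rewrite count_below_predU ?count_below_predU ?count_below_lt ?count_below_ge //.
all: by move=> i; case: (boolP (p i)) => [/pin|_] /=; lia.
Qed.

Lemma gale_parity_blocks n x y p : x <= y -> paired p -> (forall i, p i -> x <= i < y) ->
  gale_parity n (fun i => (i < x) || p i || (y <= i)).
Proof.
move=> xy pp pin; exists (odd x) => z _.
rewrite !negb_or => /andP[/andP[xz /pp ?] zy].
rewrite count_below_blocks //; lia.
Qed.

Definition facet_avoiding (s : nat -> bool) (d n : nat) (q : nat -> bool) : Prop :=
  [/\ gale_parity n q, count_below q n = d & forall i, q i -> ~~ s i].

Lemma facet_avoiding_blocks (s : nat -> bool) d n x lo e y k p :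
  x <= lo <= e -> e <= y <= n -> pairs_in s lo e k p ->
  (forall i, s i -> x <= i < y) -> x + 2 * k + (n - y) = d ->
  facet_avoiding s d n (fun i => (i < x) || p i || (y <= i)).
Proof.
move=> xe yn [pp pin ps pc] sxy dE.
have xy : x <= y by lia.
have pxy i : p i -> x <= i < y by move/pin; lia.
split; first exact: gale_parity_blocks.
- rewrite (count_below_blocks _ xy pxy) (count_below_bounded (e := e)) ?pc;
    [lia | by move=> i /pin; lia | lia].
- by move=> i /orP [/orP [ix|/ps //]|yi]; apply/negP => /sxy; lia.
Qed.

Lemma exists_facet_avoiding (s : nat -> bool) d n : d < n -> (forall i, s i -> i < n) ->
  count_below s n <= 1 \/ ~~ odd d /\ d + 2 * count_below s n <= n.+1 ->
  exists q, facet_avoiding s d n q.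
Proof.
move=> dn sn hS.
have [exs|nos] := boolP [exists i : 'I_n, s i]; last first.
  eexists; apply: (facet_avoiding_blocks (x := d) (y := n) _ _ (pairs_in0 s d d)); try lia.
  by move=> i si; case/existsP: nos; exists (Ordinal (sn i si)).
have {}exs : exists i, s i by case/existsP: exs => i; exists i.
have [a sa amin] := ex_minnP exs.
have [b sb bmax] := ex_maxnP exs (fun i si => ltnW (sn i si)).
have sab i : s i -> a <= i <= b by move=> si; rewrite amin ?bmax.
have bn := sn b sb.
have [hA|hA] := leqP d (a + (n - b.+1)).
  eexists; apply: (facet_avoiding_blocks (x := minn a d) (y := n - d + minn a d) _ _
                      (pairs_in0 s (minn a d) (minn a d))); try lia.
  by move=> i /sab; lia.
have ab : a < b by have := amin b sb; lia.
have cn : count_below s n = count_below s b + 1.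
  by rewrite (count_below_bounded (e := b.+1)) ?count_belowS ?sb // => i /sab; lia.
have ca : count_below s a.+1 = count_below s a + 1 by rewrite count_belowS sa.
have mono := count_below_mono s ab.
have [c1|[de hc]] := hS; first lia.
(* The facet is [0, x) U pairs U [y, n) with x + (n - y) even.  Taking x = a
   or y = b + 1 lets an extreme point of s border a segment, where it blocks
   one position instead of two; the parities of a and n - b - 1 decide. *)
have [ea|oa] := boolP (~~ odd a).
  have [|p pk] := @exists_pairs_in s a.+1 n (d - a)./2; first lia.
  by eexists; apply: (facet_avoiding_blocks (x := a) (y := n) _ _ pk); try lia;
     move=> i /sab; lia.
have [eb|ob] := boolP (~~ odd (n - b.+1)).
  have [|p pk] := @exists_pairs_in s 0 b (d - (n - b.+1))./2.
    by rewrite count_below0; lia.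
  by eexists; apply: (facet_avoiding_blocks (x := 0) (y := b.+1) _ _ pk); try lia;
     move=> i /sab; lia.
have [|p pk] := @exists_pairs_in s a.+1 b (d - a - (n - b.+1))./2; first lia.
by eexists; apply: (facet_avoiding_blocks (x := a) (y := b.+1) _ _ pk); try lia;
   move=> i /sab; lia.
Qed.

Lemma exists_facet_disjoint d n (S : {set 'I_n}) : d < n ->
  #|S| <= 1 \/ ~~ odd d /\ d + 2 * #|S| <= n.+1 ->
  exists2 e, e \in cyclic_facets d n & [disjoint S & e].
Proof.
pose s k := k \in [seq val x | x in S].
have sS (x : 'I_n) : s x = (x \in S) by rewrite /s mem_image //; exact: val_inj.
have cS : #|S| = count_below s n.
  by rewrite -card_set_count; apply: eq_card => x; rewrite inE sS.
have sn i : s i -> i < n by move=> /imageP [x _ ->]; exact: ltn_ord.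
move=> dn; rewrite cS => /(exists_facet_avoiding dn sn) [q [qg qc qs]].
exists [set x : 'I_n | q x].
  by rewrite inE card_set_count qc eqxx gale_even_of_parity.
rewrite disjoints_subset; apply/subsetP => x xS; rewrite !inE.
by apply/negP => /qs; rewrite sS xS.
Qed.

Lemma transversal_card_gt1 d n (S : {set 'I_n}) :
  d < n -> Defs.transversal (cyclic_facets d n) S -> 1 < #|S|.
Proof.
move=> dn /forallP tS; rewrite ltnNge; apply/negP => S1.
have [e eF] := exists_facet_disjoint dn (or_introl S1).
by have := tS e; rewrite eF => /negP.
Qed.

Lemma transversal_card_even d n (S : {set 'I_n}) : d < n -> ~~ odd d ->
  Defs.transversal (cyclic_facets d n) S -> n.+1 < d + 2 * #|S|.
Proof.
move=> dn de /forallP tS; rewrite ltnNge; apply/negP => hS.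
have [e eF] := exists_facet_disjoint dn (or_intror (conj de hS)).
by have := tS e; rewrite eF => /negP.
Qed.

Lemma gale_even_neighbor n (f : {set 'I_n.+1}) k : gale_even f -> 0 < k < n ->
  inord k \in f -> (inord k.-1 \in f) || (inord k.+1 \in f).
Proof.
move=> gf kn kf; apply/negPn/negP; rewrite negb_or => /andP[km kp].
move/forallP: gf => /(_ (inord k.-1)) /forallP /(_ (inord k.+1)) /implyP.
rewrite km kp !inordK; try lia.
have -> : [set j in f | k.-1 < j < k.+1] = [set inord k].
  apply/setP => j; rewrite !inE; apply/andP/eqP => [[_ kj] | ->].
    by apply: val_inj; rewrite /= inordK; lia.
  by rewrite kf inordK; lia.
by move/(_ ltac:(lia)); rewrite cards1.
Qed.

Lemma two_colorable_cyclic_facets d n : 3 <= d -> two_colorable (cyclic_facets d n).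
Proof.
move=> d3; exists (fun x : 'I_n => odd x) => e; rewrite inE => /andP[/eqP ed ge].
case: n e ed ge => [|n] e ed ge; first by have := max_card e; rewrite card_ord; lia.
have /subsetPn [b be] : ~~ (e \subset [set ord0; ord_max]).
  by apply/negP => /subset_leq_card; rewrite ed cards2; lia.
rewrite !inE negb_or => /andP[b0 bn].
have bint : 0 < b < n.
  by move: bn b0; rewrite -!(inj_eq val_inj) /=; have := ltn_ord b; lia.
have /orP [bm|bp] := gale_even_neighbor ge bint (etrans (congr1 _ (inord_val b)) be).
  by exists (inord b.-1), b; split=> //; rewrite inordK; lia.
by exists b, (inord b.+1); split=> //; rewrite inordK; lia.
Qed.

Lemma transversal_endpoints d n : odd d -> 0 < n ->
  Defs.transversal (cyclic_facets d n.+1) [set ord0; ord_max].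
Proof.
move=> od n0; apply/forallP => e; apply/implyP; rewrite inE => /andP[/eqP ed ge].
rewrite disjoints_subset; apply/negP => /subsetP Se.
have e0 : ord0 \notin e by have := Se ord0; rewrite !inE eqxx => /(_ isT).
have emax : ord_max \notin e by have := Se ord_max; rewrite !inE eqxx orbT => /(_ isT).
move/forallP: ge => /(_ ord0) /forallP /(_ ord_max) /implyP.
rewrite e0 emax /= n0 => /(_ isT).
have -> : [set k in e | 0 < k < n] = e.
  apply/setP => k; rewrite !inE; case ke: (k \in e) => //=.
  have k0 : k != ord0 by apply: contraNneq e0 => <-.
  have kn : k != ord_max by apply: contraNneq emax => <-.
  by have := ltn_ord k; move: k0 kn; rewrite -!(inj_eq val_inj) /=; lia.
by rewrite ed od.
Qed.

Lemma transversal_even_prefix d n s : 0 < d -> 2 * s <= n.+1 -> n.+2 < d + 2 * s ->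
  Defs.transversal (cyclic_facets d n.+1) [set x : 'I_n.+1 | ~~ odd x && (x < 2 * s)].
Proof.
move=> d0 sn ds; apply/forallP => e; apply/implyP; rewrite inE => /andP[/eqP ed ge].
rewrite disjoints_subset; apply/negP => /subsetP Se.
have notin k : ~~ odd k -> k < 2 * s -> inord k \notin e.
  move=> ek ks; have := Se (inord k); rewrite !inE inordK ?ek ?ks //; lia.
have low (x : 'I_n.+1) : x \in e -> (2 * s).-1 <= x.
  move=> xe; rewrite leqNgt; apply/negP => xs.
  have [ox|ex] := boolP (odd x); last by move: (notin x ex); rewrite inord_val xe; lia.
  have xint : 0 < x < n by lia.
  have /orP [] := gale_even_neighbor ge xint (etrans (congr1 _ (inord_val x)) xe).
    by apply/negP; apply: notin; lia.
  by apply/negP; apply: notin; lia.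
have /subset_leq_card : e \subset [set x : 'I_n.+1 | (2 * s).-1 <= x].
  by apply/subsetP => x xe; rewrite inE low.
by rewrite ed card_set_count count_below_ge; lia.
Qed.

Lemma card_even_prefix n s : #|[set x : 'I_n | ~~ odd x && (x < 2 * s)]| <= s.
Proof.
rewrite (card_set_count n (fun i => ~~ odd i && (i < 2 * s))).
rewrite (count_below_window (fun i => ~~ odd i) 0) count_below0 subn0.
by rewrite -{2}(count_below_even s) count_below_mono // geq_minl.
Qed.

Theorem proposition3p4 (d n : nat) :
  (3 <= d)%N -> (d + 1 <= n)%N ->
  two_colorable (cyclic_facets d n) /\
  (if ~~ odd d then is_tau (cyclic_facets d n) ((n - d).+1./2 + 1)
   else is_tau (cyclic_facets d n) 2).
Proof.
move=> d3 dn; split; first exact: two_colorable_cyclic_facets.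
case: n dn => [|n] dn; first lia.
have dlt : d < n.+1 by lia.
case: ifP => [de | /negbFE od].
- set s := (n.+1 - d).+1./2 + 1.
  have lower S : Defs.transversal (cyclic_facets d n.+1) S -> s <= #|S|.
    by move/(transversal_card_even dlt de); move: #|S| => c; lia.
  have tT : Defs.transversal (cyclic_facets d n.+1)
              [set x : 'I_n.+1 | ~~ odd x && (x < 2 * s)].
    by apply: transversal_even_prefix; lia.
  split=> //; exists [set x : 'I_n.+1 | ~~ odd x && (x < 2 * s)]; split=> //.
  by apply/eqP; rewrite eqn_leq card_even_prefix lower.
- have lower S : Defs.transversal (cyclic_facets d n.+1) S -> 2 <= #|S|.
    exact: transversal_card_gt1.
  have n0 : 0 < n by lia.
  have tE := transversal_endpoints od n0.
  split=> //; exists [set ord0; ord_max]; split; first exact: tE.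
  by apply/eqP; rewrite eqn_leq lower // cards2 ltnS leq_b1.
Qed.
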